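(* $\kappa_1(\Lambda_1,\Lambda_2)\le\max\{\mu_c(\Lambda_1,\Phi_1;\Phi_2),\ \mu_c(\Lambda_2,\Phi_2;\Phi_1)\}$.
   Context: Let $\mathcal H$ be a separable Hilbert space and let $\Phi_1=(\phi_{1i})_{i\in I}$ and $\Phi_2=(\phi_{2j})_{j\in J}$ be Parseval frames for $\mathcal H$, with analysis operators $\Phi_1^*f=(\langle f,\phi_{1i}\rangle)_{i\in I}$, $\Phi_2^*f=(\langle f,\phi_{2j}\rangle)_{j\in J}$. For an index subset $\Lambda$, $\mathbf 1_\Lambda$ restricts a coefficient sequence to $\Lambda$; $\|\cdot\|_1$ is the (possibly infinite) $\ell^1$ norm. Fix $\Lambda_1\subset I$, $\Lambda_2\subset J$. Mixed joint concentration: $\kappa_1(\Lambda_1,\Lambda_2)=\sup_{x,y\in\mathcal H}\frac{\|\mathbf 1_{\Lambda_1}\Phi_1^*x\|_1+\|\mathbf 1_{\Lambda_2}\Phi_2^*y\|_1}{\|\Phi_1^*y\|_1+\|\Phi_2^*x\|_1}$. Cluster coherence: $\mu_c(\Lambda_1,\Phi_1;\Phi_2)=\max_{j\in J}\sum_{i\in\Lambda_1}|\langle\phi_{1i},\phi_{2j}\rangle|$ and $\mu_c(\Lambda_2,\Phi_2;\Phi_1)=\max_{i\in I}\sum_{j\in\Lambda_2}|\langle\phi_{2j},\phi_{1i}\rangle|$ (suprema if maxima are not attained). *)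

From mathcomp Require Import all_boot all_order all_algebra.
From mathcomp Require Import all_classical all_reals all_analysis.
From mathcomp Require Import complex.
Import Order.TTheory GRing.Theory Num.Theory.

Set Implicit Arguments.
Unset Strict Implicit.
Unset Printing Implicit Defensive.

Local Open Scope ring_scope.
Local Open Scope classical_set_scope.

Section Hilbert.
Variables (R : realType) (H : lmodType R[i]).
Variable ip : H -> H -> R[i].

Definition is_inner_product : Prop :=
  [/\ (forall (a : R[i]) (x y z : H), ip (a *: x + y) z = a * ip x z + ip y z),
      (forall x y : H, ip y x = (ip x y)^*%C),
      (forall x : H, 0 <= ip x x) &
      (forall x : H, ip x x = 0 -> x = 0)].

Definition hnorm (x : H) : R := Num.sqrt (complex.Re (ip x x)).

Definition hcomplete : Prop :=
  forall u : nat -> H,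
    (forall e : R, 0 < e -> exists N : nat, forall m n : nat,
        (N <= m)%N -> (N <= n)%N -> hnorm (u m - u n) < e) ->
    exists l : H, forall e : R, 0 < e -> exists N : nat, forall n : nat,
        (N <= n)%N -> hnorm (u n - l) < e.

Definition hseparable : Prop :=
  exists d : nat -> H, forall (x : H) (e : R), 0 < e ->
    exists n : nat, hnorm (x - d n) < e.

Definition separable_hilbert : Prop :=
  [/\ is_inner_product, hcomplete & hseparable].

Local Open Scope ereal_scope.

Definition cmod (z : R[i]) : R := Normc.normc z.

Definition parseval_frame (I : choiceType) (phi : I -> H) : Prop :=
  forall f : H,
    \esum_(i in [set: I]) ((cmod (ip f (phi i))) ^+ 2)%:E = ((hnorm f) ^+ 2)%:E.

Definition coef_l1 (I : choiceType) (phi : I -> H) (Lam : set I) (f : H)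
  : \bar R :=
  \esum_(i in Lam) (cmod (ip f (phi i)))%:E.

Definition kappa1 (I J : choiceType) (phi1 : I -> H) (phi2 : J -> H)
  (Lam1 : set I) (Lam2 : set J) : \bar R :=
  ereal_sup [set r | exists x y : H,
    let den := coef_l1 phi1 [set: I] y + coef_l1 phi2 [set: J] x in
    [/\ 0 < den, den < +oo &
        r = (coef_l1 phi1 Lam1 x + coef_l1 phi2 Lam2 y) / den]].

Definition cluster_coherence (I J : choiceType) (Lam : set I)
  (phi : I -> H) (psi : J -> H) : \bar R :=
  ereal_sup [set \esum_(i in Lam) (cmod (ip (phi i) (psi j)))%:E | j in [set: J]].

End Hilbert.

From mathcomp Require Import all_boot all_order all_algebra.
From mathcomp Require Import all_classical all_reals all_analysis.
From mathcomp Require Import complex.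
From mathcomp Require Import lra ring.
Import Order.TTheory GRing.Theory Num.Theory.

(* The core estimate (coherence_bound) is: if Psi is a Parseval frame and
   sum_(i in Lam) |<phi_i, psi_j>| <= m for every j, then for every x
     ||1_Lam Phi^* x||_1 <= m ||Psi^* x||_1.
   It suffices to bound finite partial sums over s in Lam.  Writing each
   |<x, phi_i>| as Re(c_i <phi_i, x>) with a phase |c_i| <= 1 and putting
   u = sum_(i in s) c_i phi_i, the partial sum is Re <u, x>.  By polarization
   and the Parseval identity, Re <u, x> <= sum_j |<u, psi_j>| |<x, psi_j>|,
   and |<u, psi_j>| <= sum_(i in s) |<phi_i, psi_j>| <= m.
   Applying the estimate to (x, Phi1 -> Phi2, Lam1) and (y, Phi2 -> Phi1, Lam2)
   bounds the numerator of kappa_1 by m times its denominator.  The maximum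
   is nonnegative (hence either a real m >= 0 or +oo) because a positive
   denominator forces one of the two frames to be nonempty. *)

Set Implicit Arguments.
Unset Strict Implicit.
Unset Printing Implicit Defensive.

Local Open Scope ring_scope.
Local Open Scope classical_set_scope.

Section ComplexModulus.
Variable R : realType.
Implicit Types z w : R[i].

Lemma cmod_ge0 z : 0 <= cmod z.
Proof. by case: z => a b; rewrite /cmod sqrtr_ge0. Qed.

Lemma cmod_sqr z : cmod z ^+ 2 = complex.Re z ^+ 2 + complex.Im z ^+ 2.
Proof. by case: z => a b; rewrite /cmod sqr_sqrtr // addr_ge0 // sqr_ge0. Qed.

Lemma cmodM z w : cmod (z * w) = cmod z * cmod w.
Proof. exact: Normc.normcM. Qed.

Lemma cmodD z w : cmod (z + w) <= cmod z + cmod w.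
Proof. exact: le_normcD. Qed.

Lemma cmodJ z : cmod (z^*)%C = cmod z.
Proof. by case: z => a b; rewrite /cmod /= sqrrN. Qed.

Lemma cmod_real (r : R) : 0 <= r -> cmod (r%:C)%C = r.
Proof. by move=> r0; rewrite /cmod /= expr0n /= addr0 sqrtr_sqr ger0_norm. Qed.

Lemma ReD z w : complex.Re (z + w) = complex.Re z + complex.Re w.
Proof. by case: z; case: w. Qed.

(* |z + w|^2 - |z - w|^2 = 4 Re(z conj w) <= 4 |z| |w|: the pointwise form of
   the Cauchy-Schwarz step used with the Parseval identity. *)
Lemma cmod_polar_le z w :
  cmod (z + w) ^+ 2 <= cmod (z - w) ^+ 2 + 4 * (cmod z * cmod w).
Proof.
rewrite !cmod_sqr.
move: (cmod_sqr z) (cmod_sqr w) (cmod_ge0 z) (cmod_ge0 w).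
move: (cmod z) (cmod w) => A B; case: z w => [a1 a2] [b1 b2] /= sqz sqw z0 w0.
suff : a1 * b1 + a2 * b2 <= A * B by lra.
have AB0 : 0 <= A * B by rewrite mulr_ge0.
have [dot_le0|dot_gt0] := lerP (a1 * b1 + a2 * b2) 0; first by lra.
rewrite -(ler_pXn2r (n := 2)) ?nnegrE ?(ltW dot_gt0) // exprMn sqz sqw.
have := sqr_ge0 (a1 * b2 - a2 * b1); nra.
Qed.

Definition phase z : R[i] := (z^*)%C * ((cmod z)^-1)%:C%C.

Lemma Re_phaseM z : complex.Re (phase z * z) = cmod z.
Proof.
have -> : complex.Re (phase z * z)
    = (cmod z)^-1 * (complex.Re z ^+ 2 + complex.Im z ^+ 2).
  by rewrite /phase; case: z => a b /=; ring.
rewrite -cmod_sqr expr2 mulrA.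
have [->|nz] := eqVneq (cmod z) 0; first by rewrite mulr0.
by rewrite mulVf // mul1r.
Qed.

Lemma cmod_phase_le1 z : cmod (phase z) <= 1.
Proof.
rewrite cmodM cmodJ cmod_real ?invr_ge0 ?cmod_ge0 //.
have [->|nz] := eqVneq (cmod z) 0; first by rewrite mul0r.
by rewrite divff.
Qed.

End ComplexModulus.

Section InnerProduct.
Variables (R : realType) (H : lmodType R[i]) (ip : H -> H -> R[i]).
Hypothesis hip : is_inner_product ip.

Lemma ipDZ_l a x y z : ip (a *: x + y) z = a * ip x z + ip y z.
Proof. by case: hip. Qed.

Lemma ipJ x y : ip y x = (ip x y)^*%C.
Proof. by case: hip. Qed.

Lemma ipD_l x y z : ip (x + y) z = ip x z + ip y z.
Proof. by rewrite -{1}[x]scale1r ipDZ_l mul1r. Qed.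

Lemma ip0_l z : ip 0 z = 0.
Proof. by apply: (@addrI _ (ip 0 z)); rewrite -ipD_l !addr0. Qed.

Lemma ipZ_l a x z : ip (a *: x) z = a * ip x z.
Proof. by rewrite -[a *: x]addr0 ipDZ_l ip0_l addr0. Qed.

Lemma ipB_l x y z : ip (x - y) z = ip x z - ip y z.
Proof. by rewrite ipD_l -scaleN1r ipZ_l mulN1r. Qed.

Lemma ipD_r x y z : ip z (x + y) = ip z x + ip z y.
Proof. by rewrite (ipJ x z) (ipJ y z) (ipJ (x + y) z) ipD_l rmorphD. Qed.

Lemma ipB_r x y z : ip z (x - y) = ip z x - ip z y.
Proof. by rewrite (ipJ x z) (ipJ y z) (ipJ (x - y) z) ipB_l rmorphB. Qed.

Lemma ip_sum_l (T : Type) (s : seq T) (F : T -> H) z :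
  ip (\sum_(i <- s) F i) z = \sum_(i <- s) ip (F i) z.
Proof.
elim: s => [|a s IH]; first by rewrite !big_nil ip0_l.
by rewrite !big_cons ipD_l IH.
Qed.

Lemma cmod_ipC x y : cmod (ip y x) = cmod (ip x y).
Proof. by rewrite ipJ cmodJ. Qed.

Lemma hnorm_sqr x : hnorm ip x ^+ 2 = complex.Re (ip x x).
Proof.
case: hip => _ _ /(_ x) + _; rewrite /hnorm.
by case: (ip x x) => a b; rewrite lecE /= => /andP[_ a0]; rewrite sqr_sqrtr.
Qed.

Lemma polar x y :
  hnorm ip (x + y) ^+ 2 - hnorm ip (x - y) ^+ 2 = 4 * complex.Re (ip x y).
Proof.
rewrite !hnorm_sqr (ipD_l x y) !(ipD_r x y) (ipB_l x y) !(ipB_r x y) (ipJ x y).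
by case: (ip x x) => ? ?; case: (ip x y) => ? ?; case: (ip y y) => ? ? /=; lra.
Qed.

Lemma sum_cmod_ip_Re (T : Type) (s : seq T) (phi : T -> H) x :
  \sum_(i <- s) cmod (ip x (phi i))
  = complex.Re (ip (\sum_(i <- s) phase (ip (phi i) x) *: phi i) x).
Proof.
rewrite ip_sum_l; elim: s => [|a s IH]; first by rewrite !big_nil.
by rewrite !big_cons ReD -IH ipZ_l Re_phaseM cmod_ipC.
Qed.

Lemma cmod_ip_comb_le (T : Type) (s : seq T) (c : T -> R[i]) (phi : T -> H) y :
  (forall i, cmod (c i) <= 1) ->
  cmod (ip (\sum_(i <- s) c i *: phi i) y) <= \sum_(i <- s) cmod (ip (phi i) y).
Proof.
move=> c1; rewrite ip_sum_l; elim: s => [|a s IH].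
  by rewrite !big_nil /cmod Normc.normc0.
rewrite !big_cons; apply: le_trans (cmodD _ _) _; apply: lerD => //.
rewrite ipZ_l cmodM; have := c1 a; have := cmod_ge0 (ip (phi a) y); nra.
Qed.

End InnerProduct.

Local Open Scope ereal_scope.

Lemma esumZ_le (R : realType) (T : choiceType) (D : set T) (m : R) (f : T -> R) :
  (0 <= m)%R ->
  \esum_(i in D) (m * f i)%:E <= m%:E * \esum_(i in D) (f i)%:E.
Proof.
move=> m0; apply: ge_ereal_sup => _ [X [finX XD] <-].
rewrite fsumEFin // -mulr_fsumr EFinM -fsumEFin //.
by apply: lee_wpmul2l; [rewrite lee_fin | apply: ereal_sup_ubound; exists X].
Qed.

Section Frames.
Variables (R : realType) (H : lmodType R[i]) (ip : H -> H -> R[i]).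
Hypothesis hip : is_inner_product ip.

Lemma coef_l1_ge0 (I : choiceType) (phi : I -> H) (Lam : set I) x :
  0 <= coef_l1 ip phi Lam x.
Proof. by apply: esum_ge0 => i _; rewrite lee_fin cmod_ge0. Qed.

Lemma parseval_Re_le (J : choiceType) (psi : J -> H) (u x : H) :
  parseval_frame ip psi ->
  (complex.Re (ip u x))%:E <=
  \esum_(j in [set: J]) (cmod (ip u (psi j)) * cmod (ip x (psi j)))%:E.
Proof.
move=> pf; set S := esum _ _.
have S0 : 0 <= S by apply: esum_ge0 => j _; rewrite lee_fin mulr_ge0 ?cmod_ge0.
have normD_le : ((hnorm ip (u + x)) ^+ 2)%:E
    <= ((hnorm ip (u - x)) ^+ 2)%:E + 4%:E * S.
  rewrite -!pf; apply: le_trans (_ : _ <= \esum_(j in [set: J])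
      ((cmod (ip (u - x) (psi j)) ^+ 2)%:E
       + (4 * (cmod (ip u (psi j)) * cmod (ip x (psi j))))%:E)) _.
    apply: le_esum => j _; rewrite -EFinD lee_fin ipD_l // ipB_l //.
    exact: cmod_polar_le.
  rewrite esumD; last 2 first.
  - by move=> j _; rewrite lee_fin sqr_ge0.
  - by move=> j _; rewrite lee_fin !mulr_ge0 ?cmod_ge0.
  by rewrite leeD2l // esumZ_le.
have := polar hip u x; clearbody S.
case: S normD_le S0 => [s||] //= normD_le _; last by rewrite leey.
by rewrite -EFinM -EFinD lee_fin in normD_le; rewrite lee_fin; lra.
Qed.

Lemma coherence_bound (I J : choiceType) (phi : I -> H) (psi : J -> H)
  (Lam : set I) (m : R) (x : H) :
  parseval_frame ip psi -> (0 <= m)%R ->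
  (forall j, \esum_(i in Lam) (cmod (ip (phi i) (psi j)))%:E <= m%:E) ->
  coef_l1 ip phi Lam x <= m%:E * coef_l1 ip psi [set: J] x.
Proof.
move=> pf m0 cluster_le; apply: ge_ereal_sup => _ [X [finX XLam] <-].
rewrite fsumEFin // fsbig_finite //=; set s := finmap.enum_fset _.
set u := (\sum_(i <- s) phase (ip (phi i) x) *: phi i)%R.
have u_coef_le j : (cmod (ip u (psi j)) <= m)%R.
  rewrite -lee_fin; apply: le_trans (cluster_le j).
  apply: le_trans (_ : _ <= (\sum_(i <- s) cmod (ip (phi i) (psi j)))%:E) _.
    by rewrite lee_fin cmod_ip_comb_le // => i; exact: cmod_phase_le1.
  rewrite -sumEFin -fsbig_finite //; apply: ereal_sup_ubound; exists X => //.
rewrite sum_cmod_ip_Re //; apply: le_trans (parseval_Re_le u x pf) _.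
apply: le_trans (esumZ_le _ _ m0); apply: le_esum => j _; rewrite lee_fin.
by apply: ler_wpM2r; [exact: cmod_ge0 | exact: u_coef_le].
Qed.

Lemma cluster_le_coherence (I J : choiceType) (Lam : set I) (phi : I -> H)
  (psi : J -> H) (j : J) :
  \esum_(i in Lam) (cmod (ip (phi i) (psi j)))%:E
  <= cluster_coherence ip Lam phi psi.
Proof. by apply: ereal_sup_ubound; exists j. Qed.

(* The cluster coherence against a frame with at least one element is
   nonnegative (over an empty frame it is the supremum of nothing, -oo). *)
Lemma coherence_ge0 (I J : choiceType) (Lam : set I) (phi : I -> H)
  (psi : J -> H) (j : J) : 0 <= cluster_coherence ip Lam phi psi.
Proof.
apply: le_trans (cluster_le_coherence Lam phi psi j).
by apply: esum_ge0 => i _; rewrite lee_fin cmod_ge0.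
Qed.

Lemma coef_l1_neq0_inhabited (I : choiceType) (phi : I -> H) x :
  coef_l1 ip phi [set: I] x != 0 -> inhabited I.
Proof.
move=> /eqP nz; apply: contrapT => noI; apply: nz.
by apply: esum1 => i; case: noI; constructor.
Qed.

Lemma max_coherence_ge0 (I J : choiceType) (phi1 : I -> H) (phi2 : J -> H)
  (Lam1 : set I) (Lam2 : set J) (x y : H) :
  0 < coef_l1 ip phi1 [set: I] y + coef_l1 ip phi2 [set: J] x ->
  0 <= maxe (cluster_coherence ip Lam1 phi1 phi2)
            (cluster_coherence ip Lam2 phi2 phi1).
Proof.
have [A0|A_neq0] := eqVneq (coef_l1 ip phi1 [set: I] y) 0; last first.
  have [i0] := coef_l1_neq0_inhabited A_neq0.
  by rewrite le_max (coherence_ge0 _ _ _ i0) orbT.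
rewrite A0 add0e => B_gt0.
have [j] := coef_l1_neq0_inhabited (negbT (gt_eqF B_gt0)).
by rewrite le_max (coherence_ge0 _ _ _ j).
Qed.

End Frames.

Lemma div_le_of_le_mul (R : realType) (n d : \bar R) (m : R) :
  0 < d -> d < +oo -> n <= m%:E * d -> n / d <= m%:E.
Proof.
case: d => [r||] //; rewrite lte_fin => r0 _ n_le.
by rewrite inver gt_eqF // lee_pdivrMr // muleC.
Qed.

Theorem mainTheorem2 (R : realType) (H : lmodType R[i]) (ip : H -> H -> R[i])
  (I J : choiceType) (phi1 : I -> H) (phi2 : J -> H)
  (Lam1 : set I) (Lam2 : set J) :
  separable_hilbert ip ->
  parseval_frame ip phi1 ->
  parseval_frame ip phi2 ->
  kappa1 ip phi1 phi2 Lam1 Lam2 <=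
    maxe (cluster_coherence ip Lam1 phi1 phi2)
         (cluster_coherence ip Lam2 phi2 phi1).
Proof.
move=> [hip _ _] pf1 pf2.
apply: ge_ereal_sup => _ [x [y /= [den_gt0 den_fin ->]]].
have M0 := max_coherence_ge0 Lam1 Lam2 den_gt0.
set mu1 := cluster_coherence ip Lam1 phi1 phi2 in M0 *.
set mu2 := cluster_coherence ip Lam2 phi2 phi1 in M0 *.
have cluster1_le j :
    \esum_(i in Lam1) (cmod (ip (phi1 i) (phi2 j)))%:E <= maxe mu1 mu2.
  by rewrite le_max cluster_le_coherence.
have cluster2_le i :
    \esum_(j in Lam2) (cmod (ip (phi2 j) (phi1 i)))%:E <= maxe mu1 mu2.
  by rewrite le_max cluster_le_coherence orbT.
move: M0 cluster1_le cluster2_le.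
case: maxe => [m||] // M0 cluster1_le cluster2_le; last by rewrite leey.
rewrite lee_fin in M0; apply: div_le_of_le_mul den_gt0 den_fin _.
rewrite ge0_muleDr ?coef_l1_ge0 // [X in _ <= X]addeC.
by apply: leeD; [exact: coherence_bound cluster1_le | exact: coherence_bound cluster2_le].
Qed.
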